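(* Let $C\ge 2$ be an integer and let $r>0$. Let $B_r(0)=\{\mathbf{h}\in\mathbb{R}^C:\|\mathbf{h}\|_2\le r\}$. Define $$H^*(r,C):=\min_{\mathbf{h}\in B_r(0)} H(\mathrm{softmax}(\mathbf{h})).$$ Then $$H^*(r,C) > \log\left(1+(C-1)\exp\left(-\sqrt{\tfrac{C}{C-1}}\,r\right)\right).$$ In particular, for every $\mathbf{h}\in B_r(0)$, $H(\mathrm{softmax}(\mathbf{h}))>\log\left(1+(C-1)\exp\left(-\sqrt{\tfrac{C}{C-1}}\,r\right)\right)$. *)

From HB Require Import structures.
From mathcomp Require Import all_boot all_order all_algebra.
From mathcomp Require Import all_classical all_reals.
From mathcomp Require Import sequences exp.
Unset Printing Implicit Defensive.
Import Order.TTheory GRing.Theory Num.Theory.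
Local Open Scope ring_scope.
Local Open Scope classical_set_scope.

Definition norm2 {R : realType} (C : nat) (h : 'I_C -> R) : R :=
  Num.sqrt (\sum_(i < C) h i ^+ 2).

Definition ball0 {R : realType} (C : nat) (r : R) : set ('I_C -> R) :=
  [set h | norm2 C h <= r].

Definition softmax {R : realType} (C : nat) (h : 'I_C -> R) : 'I_C -> R :=
  fun i => expR (h i) / \sum_(j < C) expR (h j).

Definition entropy {R : realType} (C : nat) (p : 'I_C -> R) : R :=
  - \sum_(i < C) p i * ln (p i).

(* H^*(r,C) := min over B_r(0) of H(softmax h); the min is attained by
   compactness, so it coincides with the infimum, which we use here. *)
Definition Hstar {R : realType} (C : nat) (r : R) : R :=
  inf [set entropy C (softmax C h) | h in ball0 C r].

From HB Require Import structures.
From mathcomp Require Import all_boot all_order all_algebra.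
From mathcomp Require Import all_classical all_reals.
From mathcomp Require Import sequences exp.
From mathcomp Require Import ring lra.
Import Order.TTheory GRing.Theory Num.Theory.
Local Open Scope ring_scope.

(* Let [M] be the largest coordinate of [h].  Then
   [H(softmax h) = ln (\sum_i e^(h_i - M)) + \sum_i p_i (M - h_i)], and the
   second sum is nonnegative.  Jensen's inequality for [exp] over the other
   [C - 1] coordinates, whose mean distance to [M] is at most
   [sqrt (C / (C - 1)) r] by Cauchy-Schwarz on the ball, bounds the first term
   below by the claimed logarithm.  The strict bound on the infimum needs a
   gap uniform in [h]: either all coordinates are within a fixed [D] of [M],
   and then every [e^(h_i - M)] is large, or the smallest one is far from [M]
   and its term [p_i (M - h_i)] is at least [e^(-2r) D / C]. *)

Lemma sqr_sum_le_card_sum_sqr {R : realFieldType} {I : finType} (A : {pred I})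
    (x : I -> R) :
  (\sum_(i in A) x i) ^+ 2 <= #|A|%:R * \sum_(i in A) x i ^+ 2.
Proof.
set N : R := #|A|%:R; set t := \sum_(i in A) x i; set q := \sum_(i in A) x i ^+ 2.
have [/card0_eq A0|A_gt0] := posnP #|A|.
  by rewrite /t big_pred0 // expr0n /= mulr_ge0 ?ler0n ?sumr_ge0 // => i _; apply: sqr_ge0.
(* Expanding [0 <= \sum_(i in A) (N x_i - t)^2] gives [0 <= N (N q - t^2)]. *)
have : 0 <= \sum_(i in A) (N * x i - t) ^+ 2 by apply: sumr_ge0 => i _; apply: sqr_ge0.
rewrite (eq_bigr (fun i => N ^+ 2 * x i ^+ 2 - (2 * N * t) * x i + t ^+ 2)); last first.
  by move=> i _; rewrite sqrrB; ring.
rewrite big_split sumrB /= -!mulr_sumr sumr_const mulrnAr -[_ *+ #|A|]mulr_natr -/q -/t -/N.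
have N_gt0 : 0 < N by rewrite ltr0n.
nra.
Qed.

Lemma natr_card_predC1 {R : pzRingType} {C : nat} (k : 'I_C) :
  #|predC1 k|%:R = C%:R - 1 :> R.
Proof. by rewrite cardC1 card_ord -subn1 natrB // (leq_ltn_trans _ (ltn_ord k)). Qed.

Lemma sqr_sum_sub_le {R : realFieldType} {C : nat} (x : 'I_C -> R) (k : 'I_C) :
  (\sum_i (x k - x i)) ^+ 2 <= C%:R * (C%:R - 1) * \sum_i x i ^+ 2.
Proof.
set A := predC1 k; set n : R := C%:R.
have n_ge1 : 1 <= n by rewrite /n ler1n (leq_ltn_trans _ (ltn_ord k)).
have cardA : #|A|%:R = n - 1 := natr_card_predC1 k.
have QM := sqr_sum_le_card_sum_sqr A x; rewrite cardA in QM.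
rewrite [in X in X ^+ 2](bigD1 k) //= subrr add0r sumrB sumr_const -mulr_natl cardA.
rewrite [in X in _ <= X](bigD1 k) //=.
have : 0 <= (n - 1) * (x k + \sum_(i in A) x i) ^+ 2 by rewrite mulr_ge0 ?sqr_ge0 ?subr_ge0.
nra.
Qed.

Lemma card_mul_expR_mean_le {R : realType} {I : finType} (A : {pred I})
    (x : I -> R) :
  #|A|%:R * expR ((\sum_(i in A) x i) / #|A|%:R) <= \sum_(i in A) expR (x i).
Proof.
set N : R := #|A|%:R; set mu := _ / N.
have NmuE : N * mu = \sum_(i in A) x i.
  have [A0|A_gt0] := posnP #|A|.
    by rewrite /N A0 mul0r big_pred0 //; apply: card0_eq.
  by rewrite mulrC divfK // pnatr_eq0 -lt0n.
(* tangent line of [expR] at the mean *)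
have tangent i : expR mu * (1 + (x i - mu)) <= expR (x i).
  by rewrite -[in X in _ <= X](subrK mu (x i)) expRD mulrC ler_wpM2r ?expR_ge0 ?expR_ge1Dx.
apply: le_trans (ler_sum _ (fun i _ => tangent i)).
rewrite -mulr_sumr big_split sumrB /= !sumr_const -[mu *+ _]mulr_natl -/N NmuE.
by rewrite subrr addr0 mulrC.
Qed.

Section softmax.
Context {R : realType} {C : nat} {h : 'I_C -> R}.

Lemma sum_expR_gt0 : (0 < C)%N -> 0 < \sum_i expR (h i).
Proof.
move=> C_gt0; rewrite (bigD1 (Ordinal C_gt0)) //=.
by rewrite ltr_pwDl ?expR_gt0 ?sumr_ge0 // => i _; apply: expR_ge0.
Qed.

Lemma softmax_ge0 i : 0 <= softmax C h i.
Proof. by rewrite /softmax divr_ge0 ?expR_ge0 ?sumr_ge0 // => j _; apply: expR_ge0. Qed.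

Lemma entropy_softmax (M : R) : (0 < C)%N ->
  entropy C (softmax C h) =
  ln (\sum_i expR (h i - M)) + \sum_i softmax C h i * (M - h i).
Proof.
move=> C_gt0; set Z := \sum_i expR (h i); have Z_gt0 := sum_expR_gt0 C_gt0.
have sum_softmax : \sum_i softmax C h i = 1 by rewrite -mulr_suml mulfV ?gt_eqF.
have ln_softmax i : ln (softmax C h i) = h i - ln Z.
  by rewrite ln_div ?expRK // posrE expR_gt0.
have -> : \sum_i expR (h i - M) = Z * expR (- M).
  by rewrite mulr_suml; apply: eq_bigr => i _; rewrite expRD.
rewrite lnM ?posrE ?expR_gt0 // expRK /entropy.
under eq_bigr do rewrite ln_softmax mulrBr.
under [in RHS]eq_bigr do rewrite mulrBr.
by rewrite !sumrB -!(mulr_suml _ _ _ (ln Z)) -!(mulr_suml _ _ _ M) sum_softmax; ring.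
Qed.

Lemma softmax_ge_expR_sub (k i : 'I_C) : (forall j, h j <= h k) ->
  expR (h i - h k) / C%:R <= softmax C h i.
Proof.
move=> h_le; have C_gt0 : (0 < C)%N by apply: leq_ltn_trans (ltn_ord k).
have Z_gt0 := sum_expR_gt0 C_gt0.
have Z_le : \sum_j expR (h j) <= C%:R * expR (h k).
  have -> : C%:R * expR (h k) = \sum_(j < C) expR (h k).
    by rewrite sumr_const card_ord mulr_natl.
  by apply: ler_sum => j _; rewrite ler_expR.
rewrite /softmax expRD expRN -mulrA -invfM ler_wpM2l ?expR_ge0 //.
by rewrite lef_pV2 ?posrE ?mulr_gt0 ?ltr0n ?expR_gt0 // mulrC.
Qed.

Lemma entropy_softmax_ge (k j : 'I_C) : (forall i, h i <= h k) ->
  ln (\sum_i expR (h i - h k)) + softmax C h j * (h k - h j)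
  <= entropy C (softmax C h).
Proof.
move=> h_le; rewrite (entropy_softmax (h k)) ?(leq_ltn_trans _ (ltn_ord k)) //.
rewrite lerD2l (bigD1 j) //= lerDl.
by apply: sumr_ge0 => i _; rewrite mulr_ge0 ?softmax_ge0 ?subr_ge0.
Qed.

End softmax.

Lemma ball0_sum_sqr_le {R : realType} {C : nat} {r : R} {h : 'I_C -> R} :
  ball0 C r h -> \sum_i h i ^+ 2 <= r ^+ 2.
Proof.
rewrite /ball0 /norm2 /= => norm_le.
have sum_ge0 : 0 <= \sum_i h i ^+ 2 by apply: sumr_ge0 => i _; apply: sqr_ge0.
rewrite -(sqr_sqrtr sum_ge0) ler_pXn2r // ?nnegrE ?sqrtr_ge0 //.
exact: le_trans (sqrtr_ge0 _) norm_le.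
Qed.

Lemma ball0_norm_le {R : realType} {C : nat} {r : R} {h : 'I_C -> R} i :
  ball0 C r h -> `|h i| <= r.
Proof.
move=> h_ball; have r_ge0 : 0 <= r := le_trans (sqrtr_ge0 _) h_ball.
have sum_le := ball0_sum_sqr_le h_ball.
rewrite -(ler_pXn2r (_ : (0 < 2)%N)) ?nnegrE // real_normK ?num_real //.
apply: le_trans sum_le; rewrite (bigD1 i) //= lerDl.
by apply: sumr_ge0 => j _; apply: sqr_ge0.
Qed.

Section entropy_lower_bound.
Variables (R : realType) (C : nat) (r : R).
Hypotheses (C_ge2 : (2 <= C)%N) (r_gt0 : 0 < r).

Local Notation n := (C%:R : R).
Let kappa := Num.sqrt (n / (n - 1)).
Let Smin := 1 + (n - 1) * expR (- (kappa * r)).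

Let n_ge2 : 2 <= n. Proof. by rewrite (ler_nat R 2 C). Qed.

Let n1_gt0 : 0 < n - 1. Proof. by have := n_ge2; lra. Qed.

Let n_gt0 : 0 < n. Proof. exact: lt_le_trans n_ge2. Qed.

Let kappa_gt0 : 0 < kappa. Proof. by rewrite sqrtr_gt0 divr_gt0. Qed.

Let sqr_kappa : kappa ^+ 2 * (n - 1) = n.
Proof. by rewrite sqr_sqrtr ?divfK ?divr_ge0 ?ltW // gt_eqF. Qed.

Let Smin_ge1 : 1 <= Smin. Proof. by rewrite lerDl mulr_ge0 ?expR_ge0 ?ltW. Qed.

Let Smin_gt0 : 0 < Smin. Proof. exact: lt_le_trans Smin_ge1. Qed.

Let Smin_lt_n : Smin < n.
Proof.
have := n1_gt0; have : expR (- (kappa * r)) < 1 by rewrite expR_lt1 oppr_lt0 mulr_gt0.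
rewrite /Smin; nra.
Qed.

Lemma ball0_sum_sub_le {h : 'I_C -> R} k : ball0 C r h ->
  \sum_i (h k - h i) <= (n - 1) * kappa * r.
Proof.
move=> h_ball; have sqr_le := sqr_sum_sub_le h k.
have n_n1_ge0 : 0 <= n * (n - 1) by rewrite mulr_ge0 ?ltW.
have {}sqr_le : (\sum_i (h k - h i)) ^+ 2 <= n * (n - 1) * r ^+ 2.
  exact: le_trans sqr_le (ler_wpM2l n_n1_ge0 (ball0_sum_sqr_le h_ball)).
have : ((n - 1) * kappa * r) ^+ 2 = n * (n - 1) * r ^+ 2.
  by transitivity ((n - 1) * (kappa ^+ 2 * (n - 1)) * r ^+ 2);
    [ring | rewrite sqr_kappa; ring].
have := mulr_ge0 (mulr_ge0 (ltW n1_gt0) (ltW kappa_gt0)) (ltW r_gt0).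
nra.
Qed.

Lemma sum_expR_sub_max_ge {h : 'I_C -> R} {k} :
  ball0 C r h -> (forall i, h i <= h k) -> Smin <= \sum_i expR (h i - h k).
Proof.
move=> h_ball h_le; set A := predC1 k.
have cardA : #|A|%:R = n - 1 := natr_card_predC1 k.
have sumAE : \sum_(i in A) (h i - h k) = - \sum_i (h k - h i).
  by rewrite [in RHS](bigD1 k) //= subrr add0r -sumrN; apply: eq_bigr => i _; rewrite opprB.
have mean_ge : - (kappa * r) <= (\sum_(i in A) (h i - h k)) / (n - 1).
  by rewrite ler_pdivlMr // sumAE; have := ball0_sum_sub_le k h_ball; lra.
rewrite (bigD1 k) //= subrr expR0 lerD2l.
apply: le_trans (card_mul_expR_mean_le A (fun i => h i - h k)).
by rewrite cardA ler_wpM2l ?ler_expR // ltW.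
Qed.

(* Any level strictly between [Smin / n] and [1] would do for [q]. *)
Let q := (1 + Smin / n) / 2.
Let D := - ln q.

Let Smin_lt_nq : Smin < n * q.
Proof.
have : Smin / n < 1 by rewrite ltr_pdivrMr ?mul1r // n_gt0.
by rewrite -ltr_pdivrMl ?n_gt0 // /q; lra.
Qed.

Let q_gt0 : 0 < q.
Proof. by rewrite /q divr_gt0 // addr_gt0 // divr_gt0. Qed.

Let D_gt0 : 0 < D.
Proof.
have : Smin / n < 1 by rewrite ltr_pdivrMr ?mul1r // n_gt0.
by move=> Sn_lt1; rewrite oppr_gt0 ln_lt0 // q_gt0 /q; lra.
Qed.

Lemma entropy_softmax_uniform_gap : exists2 g, 0 < g &
  forall h, ball0 C r h -> ln Smin + g <= entropy C (softmax C h).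
Proof.
exists (Num.min (ln (n * q) - ln Smin) (expR (- (2 * r)) * D / n)).
  rewrite lt_min; apply/andP; split.
    by rewrite subr_gt0 ltr_ln ?posrE // mulr_gt0.
  by rewrite divr_gt0 // mulr_gt0 // expR_gt0.
move=> h h_ball.
have i0 : 'I_C := Ordinal (ltnW C_ge2).
have [k _ h_max] := @arg_maxP _ _ _ i0 xpredT h isT.
have [j _ h_min] := @arg_minP _ _ _ i0 xpredT h isT.
have [spread_le|spread_gt] := lerP (h k - h j) D.
- (* every term [expR (h i - h k)] is at least [expR (- D) = q] *)
  have nq_le : n * q <= \sum_i expR (h i - h k).
    have -> : n * q = \sum_(i < C) expR (- D).
      by rewrite opprK lnK ?posrE // sumr_const card_ord mulr_natl.
    apply: ler_sum => i _; rewrite ler_expR; have := h_min i isT; lra.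
  apply: le_trans _ (entropy_softmax_ge k k (fun i => h_max i isT)).
  rewrite subrr mulr0 addr0; apply: le_trans (_ : ln (n * q) <= _).
    by rewrite -lerBrDl ge_min lexx.
  have nq_gt0 : 0 < n * q by rewrite mulr_gt0.
  by rewrite ler_ln ?posrE // (lt_le_trans nq_gt0).
- have p_ge : expR (- (2 * r)) / n <= softmax C h j.
    apply: le_trans _ (softmax_ge_expR_sub k j (fun i => h_max i isT)).
    rewrite ler_pM2r ?invr_gt0 ?n_gt0 // ler_expR.
    by have := ball0_norm_le j h_ball; have := ball0_norm_le k h_ball; rewrite !ler_norml; lra.
  apply: le_trans _ (entropy_softmax_ge k j (fun i => h_max i isT)).
  have Smin_le := sum_expR_sub_max_ge h_ball (fun i => h_max i isT).
  apply: lerD; first by rewrite ler_ln ?posrE // (lt_le_trans Smin_gt0).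
  apply: le_trans (_ : expR (- (2 * r)) * D / n <= _); first by rewrite ge_min lexx orbT.
  by rewrite mulrAC ler_pM ?divr_ge0 ?expR_ge0 ?ler0n // ltW.
Qed.

End entropy_lower_bound.

Local Open Scope classical_set_scope.

Theorem theorem1 (R : realType) (C : nat) (r : R) (hC : (2 <= C)%N) (hr : 0 < r) :
  let bound := ln (1 + (C%:R - 1) * expR (- (Num.sqrt (C%:R / (C%:R - 1)) * r))) in
  Hstar C r > bound /\
  (forall h : 'I_C -> R, ball0 C r h -> entropy C (softmax C h) > bound).
Proof.
move=> bound; have [g g_gt0 gapP] := entropy_softmax_uniform_gap R C r hC hr.
split; last by move=> h /gapP; rewrite /bound; lra.
apply: lt_le_trans (_ : bound + g <= _); first by lra.
apply: lb_le_inf; last by move=> _ [h h_ball <-]; apply: gapP.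
exists (entropy C (softmax C (fun=> 0))), (fun=> 0) => //.
by rewrite /ball0 /norm2 /= big1 ?sqrtr0 ?(ltW hr) // => i _; rewrite expr0n.
Qed.
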